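(* Let $K=K_0\supset K_1\supset K_2\supset\cdots$ be a module with a decreasing filtration by submodules (with the convention $K_q=K_0$ for $q<0$), and for each integer $r\ge -1$ let $\partial_r:K\to K$ be a linear map with $\partial_r(K_p)\subset K_p$ for all $p$, $\partial_{-1}=0$, and $\partial_r\circ\partial_s=0$ for all $r,s\ge -1$. For $r\ge -1$ and integers $p$ put $Z^r_p=\{x\in K_p:\ \partial_r x\in K_{p+r}\}$. Assume the following property: for all $r\ge 0$ and all $p$, if $x\in Z^r_p$ or $x\in Z^{r-1}_p$, then $\partial_r x-\partial_{r-1}x\in Z^{r-1}_{p+r}$. Then $\partial_{r-1}\bigl(Z^{r-1}_{p-r+1}\bigr)\subset Z^r_p$ for all $r\ge 0$ and all $p\ge 0$.
   Context: The maps $\partial_r$ play the role of varying boundary operators converging in the filtration topology. *)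

From HB Require Import structures.
From mathcomp Require Import all_boot all_order all_algebra.
Set Implicit Arguments. Unset Strict Implicit. Unset Printing Implicit Defensive.
Import Order.TTheory GRing.Theory Num.Theory.
Local Open Scope ring_scope.

Definition is_filtration (R : pzRingType) (V : lmodType R) (K : int -> {pred V}) :=
  [/\ forall p, 0 \in K p,
      forall p (a : R) (u v : V), u \in K p -> v \in K p -> a *: u + v \in K p,
      forall p q, p <= q -> {subset K q <= K p},
      forall q, q < 0 -> K q =i K 0
    & forall x, x \in K 0].

Definition Zrp (R : pzRingType) (V : lmodType R) (K : int -> {pred V})
  (d : int -> {linear V -> V}) (r p : int) : {pred V} :=
  [pred x | (x \in K p) && (d r x \in K (p + r))].

From HB Require Import structures.
From mathcomp Require Import all_boot all_order all_algebra.
Import Order.TTheory GRing.Theory Num.Theory.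
Local Open Scope ring_scope.
From mathcomp Require Import ring lra.

(* Since every composite [∂_r ∘ ∂_s] vanishes, a boundary [∂_s x] lying in
   [K_p] lies in every [Z^r_p]: its image under [∂_r] is [0]. *)

Section BoundariesInZ.

Variables (R : pzRingType) (V : lmodType R).
Variables (K : int -> {pred V}) (d : int -> {linear V -> V}).

Hypothesis K0 : forall p, 0 \in K p.
Hypothesis dd : forall r s x, -1 <= r -> -1 <= s -> d r (d s x) = 0.

Lemma boundary_in_Zrp r s p x :
  -1 <= r -> -1 <= s -> d s x \in K p -> d s x \in Zrp K d r p.
Proof. by move=> r_ge s_ge dx_Kp; apply/andP; rewrite dd. Qed.

Lemma boundary_of_Zrp r q x :
  x \in Zrp K d r q -> d r x \in K (q + r).
Proof. by rewrite inE => /andP[]. Qed.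

End BoundariesInZ.

Theorem mainTheorem3 (R : pzRingType) (V : lmodType R)
  (K : int -> {pred V}) (d : int -> {linear V -> V}) :
  is_filtration K ->
  (forall r p (x : V), -1 <= r -> x \in K p -> d r x \in K p) ->
  (forall x : V, d (-1) x = 0) ->
  (forall r s (x : V), -1 <= r -> -1 <= s -> d r (d s x) = 0) ->
  (forall r p (x : V), 0 <= r ->
     (x \in Zrp K d r p) || (x \in Zrp K d (r - 1) p) ->
     d r x - d (r - 1) x \in Zrp K d (r - 1) (p + r)) ->
  forall r p : int, 0 <= r -> 0 <= p ->
    forall x : V, x \in Zrp K d (r - 1) (p - r + 1) ->
      d (r - 1) x \in Zrp K d r p.
Proof.
move=> [K0 _ _ _ _] _ _ dd _ r p r_ge0 _ x /boundary_of_Zrp.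
have -> : p - r + 1 + (r - 1) = p by ring.
by apply: boundary_in_Zrp => //; lra.
Qed.
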